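(* Let $S^0$ be an inverse semigroup with semilattice of idempotents $E^0$ and let $I$ be a left regular band having $E^0$ as a semilattice transversal. Suppose there is a left action $(x,e)\mapsto x\ast e$ of $S^0$ on $I$ (so $(xy)\ast e=x\ast(y\ast e)$) with $x\ast(ef)=(x\ast e)(x\ast f)$ for all $x\in S^0$, $e,f\in I$, satisfying: 1. for all $x,y\in S^0$, $x\ast(yy^{-1})=(xy)(xy)^{-1}$; 2. for all $x\in S^0$, $e\in I$, $(xx^{-1})\ast e=(xx^{-1})e$. Define on $W=\{(e,x)\in I\times S^0: e\in L_{xx^{-1}}\}$ the multiplication $(e,x)(g,y)=(e(x\ast g),xy)$. Then $W$ is a left inverse semigroup with an inverse transversal isomorphic to $S^0$, and $I(W)\cong I$. Moreover every left inverse semigroup with an inverse transversal can be constructed (up to isomorphism) in this way.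
   Context: $V(x)$ denotes the set of inverses of $x$. A left inverse semigroup is a regular semigroup in which each $\mathcal{R}$-class contains a unique idempotent (equivalently its idempotents form a left regular band). An inverse subsemigroup $T^0$ of a regular semigroup $T$ is an inverse transversal if $|V(x)\cap T^0|=1$ for all $x\in T$; writing $x^0$ for this element, $I(T)=\{xx^0:x\in T\}$. A left regular band satisfies $xyx=xy$; $E^0$ is a semilattice transversal of $I$ if it is a subsemilattice of $I$ and each element of $I$ has exactly one inverse in $E^0$. For $x\in E^0$, $L_x$ is the $\mathcal{L}$-class of $x$ in $I$. *)

(* A semigroup whose carrier is the whole type uses the
   domain (fun _ => True). *)

Section Generic.
Context {T : Type}.
Variable D : T -> Prop.
Variable mul : T -> T -> T.

Definition closed_on : Prop := forall a b, D a -> D b -> D (mul a b).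

Definition assoc_on : Prop :=
  forall a b c, D a -> D b -> D c -> mul a (mul b c) = mul (mul a b) c.

Definition semigroup_on : Prop := closed_on /\ assoc_on.

Definition inverse_of (a b : T) : Prop := mul a (mul b a) = a /\ mul b (mul a b) = b.

Definition idempotent (e : T) : Prop := mul e e = e.

Definition regular_on : Prop :=
  semigroup_on /\ forall a, D a -> exists b, D b /\ inverse_of a b.

(* Green's relations, computed inside the semigroup D (with S^1) *)
Definition Rrel (a b : T) : Prop :=
  (a = b \/ exists u, D u /\ a = mul b u) /\ (b = a \/ exists v, D v /\ b = mul a v).
Definition Lrel (a b : T) : Prop :=
  (a = b \/ exists u, D u /\ a = mul u b) /\ (b = a \/ exists v, D v /\ b = mul v a).

Definition inverse_semigroup_on : Prop :=
  semigroup_on /\ forall a, D a -> exists! b, D b /\ inverse_of a b.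

Definition left_inverse_semigroup_on : Prop :=
  regular_on /\ forall a, D a -> exists! e, D e /\ idempotent e /\ Rrel a e.

Definition left_regular_band_on : Prop :=
  semigroup_on /\ (forall a, D a -> idempotent a) /\
  (forall a b, D a -> D b -> mul a (mul b a) = mul a b).

Definition inverse_subsemigroup (T0 : T -> Prop) : Prop :=
  (forall a, T0 a -> D a) /\
  (forall a b, T0 a -> T0 b -> T0 (mul a b)) /\
  (forall a, T0 a -> exists! b, T0 b /\ inverse_of a b).

Definition inverse_transversal (T0 : T -> Prop) : Prop :=
  regular_on /\ inverse_subsemigroup T0 /\
  forall x, D x -> exists! y, T0 y /\ inverse_of x y.

(* I(T) = { x x^0 : x in T }, where x^0 is the unique inverse of x in T0 *)
Definition I_set (T0 : T -> Prop) (z : T) : Prop :=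
  exists x y, D x /\ T0 y /\ inverse_of x y /\ z = mul x y.

Definition semilattice_transversal (E0 : T -> Prop) : Prop :=
  (forall a, E0 a -> D a) /\
  (forall a b, E0 a -> E0 b -> E0 (mul a b)) /\
  (forall a, E0 a -> idempotent a) /\
  (forall a b, E0 a -> E0 b -> mul a b = mul b a) /\
  (forall a, D a -> exists! b, E0 b /\ inverse_of a b).
End Generic.

Definition sg_iso {T1 T2 : Type} (D1 : T1 -> Prop) (mul1 : T1 -> T1 -> T1)
  (D2 : T2 -> Prop) (mul2 : T2 -> T2 -> T2) : Prop :=
  semigroup_on D1 mul1 /\ semigroup_on D2 mul2 /\
  exists f : T1 -> T2,
    (forall a, D1 a -> D2 (f a)) /\
    (forall a b, D1 a -> D1 b -> f a = f b -> a = b) /\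
    (forall c, D2 c -> exists a, D1 a /\ f a = c) /\
    (forall a b, D1 a -> D1 b -> f (mul1 a b) = mul2 (f a) (f b)).

Definition Full {T : Type} : T -> Prop := fun _ => True.

(* Data of the construction:
   S0 = (S, mulS) inverse semigroup, invS its inversion;
   I  = (I, mulI) left regular band;
   iota identifies the semilattice E0 of idempotents of S0 with a
   semilattice transversal of I (iota is only relevant on idempotents);
   act : S -> I -> I is the left action x * e. *)
Definition E0_in_I {S I : Type} (mulS : S -> S -> S) (iota : S -> I) (a : I) : Prop :=
  exists e, idempotent mulS e /\ a = iota e.

Definition construction_hyp (S : Type) (mulS : S -> S -> S) (invS : S -> S)
  (I : Type) (mulI : I -> I -> I) (iota : S -> I) (act : S -> I -> I) : Prop :=
  inverse_semigroup_on Full mulS /\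
  (forall x, inverse_of mulS x (invS x)) /\
  left_regular_band_on Full mulI /\
  (forall e f, idempotent mulS e -> idempotent mulS f -> iota e = iota f -> e = f) /\
  (forall e f, idempotent mulS e -> idempotent mulS f ->
      iota (mulS e f) = mulI (iota e) (iota f)) /\
  semilattice_transversal Full mulI (E0_in_I mulS iota) /\
  (forall x y e, act (mulS x y) e = act x (act y e)) /\
  (forall x e f, act x (mulI e f) = mulI (act x e) (act x f)) /\
  (forall x y, act x (iota (mulS y (invS y)))
               = iota (mulS (mulS x y) (invS (mulS x y)))) /\
  (forall x e, act (mulS x (invS x)) e = mulI (iota (mulS x (invS x))) e).

Definition Wdom {S I : Type} (mulS : S -> S -> S) (invS : S -> S)
  (mulI : I -> I -> I) (iota : S -> I) (p : I * S) : Prop :=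
  Lrel Full mulI (fst p) (iota (mulS (snd p) (invS (snd p)))).

Definition Wmul {S I : Type} (mulS : S -> S -> S) (mulI : I -> I -> I)
  (act : S -> I -> I) (p q : I * S) : I * S :=
  (mulI (fst p) (act (snd p) (fst q)), mulS (snd p) (snd q)).

(* A pair (e, x) of W models the product e x in a left inverse semigroup, the action
   x * e modelling the conjugate x e x^0. Condition 1 keeps W closed under the product
   and makes the pairs (x x^-1, x) a copy of S^0; condition 2 makes (e, x x^-1)
   idempotent, and it is the only idempotent R-related to (e, x), whose inverse in that
   copy of S^0 is (x^-1 x, x^-1). I(W) consists of the pairs (e, f) with f idempotent,
   and (e, f) |-> e is an isomorphism onto I because E^0 is a transversal of I.
   Conversely, in a left inverse semigroup T with inverse transversal T^0 the
   idempotents form a left regular band containing the idempotents of T^0 as a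
   transversal, T^0 acts on them by e |-> x e x^0, and t |-> (t t^0, t^00) is an
   isomorphism of T onto the resulting W, with inverse (e, x) |-> e x. *)

From Stdlib Require Import Setoid ClassicalEpsilon ProofIrrelevance.

Lemma val_inj {A : Type} {P : A -> Prop} (u v : sig P) :
  proj1_sig u = proj1_sig v -> u = v.
Proof. apply eq_sig_hprop. intros; apply proof_irrelevance. Qed.

Lemma inverse_of_sym {X : Type} (m : X -> X -> X) a b :
  inverse_of m a b -> inverse_of m b a.
Proof. intros [H1 H2]; split; assumption. Qed.

Lemma Rrel_idem_factors {X : Type} (D : X -> Prop) (m : X -> X -> X) a b :
  D b -> m b b = b -> Rrel D m a b ->
  (exists u, D u /\ a = m b u) /\ (exists v, D v /\ b = m a v).
Proof.
  intros Db Hb [[-> | Hu] [Hv | Hv]]; split; try assumption;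
    exists b; split; congruence.
Qed.

Definition band_L {X : Type} (m : X -> X -> X) (e f : X) : Prop :=
  m e f = e /\ m f e = f.

Lemma Lrel_bandE {X : Type} (m : X -> X -> X) :
  (forall a b c, m a (m b c) = m (m a b) c) -> (forall a, m a a = a) ->
  forall e f, Lrel Full m e f <-> band_L m e f.
Proof.
  intros mA mI e f. split.
  - assert (Lhalf : forall a b, (a = b \/ exists u, Full u /\ a = m u b) -> m a b = a).
    { intros a b [-> | [u [_ ->]]]; [apply mI | rewrite <- mA, mI; reflexivity]. }
    intros [Hef Hfe]. split; apply Lhalf; assumption.
  - intros [Hef Hfe]. split; right; [exists e | exists f]; split; easy.
Qed.

Lemma semigroup_full_assoc {X : Type} (m : X -> X -> X) :
  semigroup_on Full m -> forall a b c, m a (m b c) = m (m a b) c.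
Proof. intros [_ mA] a b c. apply mA; exact Logic.I. Qed.

Lemma idem_mulK {X : Type} (m : X -> X -> X) :
  (forall a b c, m a (m b c) = m (m a b) c) ->
  forall e z, m e e = e -> m e (m e z) = m e z.
Proof. intros mA e z He. rewrite mA, He. reflexivity. Qed.

Section RegularWithInverse.
Variables (S : Type) (mul : S -> S -> S) (inv : S -> S).
Local Infix "**" := mul (at level 40, left associativity).
Hypothesis mulA : forall a b c, a ** (b ** c) = (a ** b) ** c.
Hypothesis invP : forall x, inverse_of mul x (inv x).

Lemma mul_inv_mulK x z : x ** (inv x ** (x ** z)) = x ** z.
Proof. rewrite (mulA (inv x)), mulA, (proj1 (invP x)). reflexivity. Qed.

Lemma inv_mul_invK x z : inv x ** (x ** (inv x ** z)) = inv x ** z.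
Proof. rewrite (mulA x), mulA, (proj2 (invP x)). reflexivity. Qed.

Lemma mul_inv_idem x : (x ** inv x) ** (x ** inv x) = x ** inv x.
Proof. rewrite <- !mulA, mul_inv_mulK. reflexivity. Qed.

Lemma inv_mul_idem x : (inv x ** x) ** (inv x ** x) = inv x ** x.
Proof. rewrite <- !mulA, inv_mul_invK. reflexivity. Qed.

Lemma mul_inv_absorb x y :
  (x ** inv x) ** ((x ** y) ** inv (x ** y)) = (x ** y) ** inv (x ** y).
Proof. rewrite <- !mulA, mul_inv_mulK. reflexivity. Qed.

End RegularWithInverse.

Section InverseSemigroup.
Variables (S : Type) (mul : S -> S -> S) (inv : S -> S).
Local Infix "**" := mul (at level 40, left associativity).
Hypothesis mulA : forall a b c, a ** (b ** c) = (a ** b) ** c.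
Hypothesis inv_unique : forall a b c, inverse_of mul a b -> inverse_of mul a c -> b = c.
Hypothesis invP : forall x, inverse_of mul x (inv x).

Lemma idem_inv e : e ** e = e -> inv e = e.
Proof. intro He. apply (inv_unique e); [apply invP | split; rewrite He; assumption]. Qed.

Lemma inv_involutive x : inv (inv x) = x.
Proof. apply (inv_unique (inv x)); [apply invP | apply inverse_of_sym, invP]. Qed.

(* [f (ef)^-1 e] is an inverse of [ef], so it equals [(ef)^-1]; this makes [(ef)^-1]
   idempotent, hence self-inverse, hence equal to [ef]. *)
Lemma idem_mul_idem e f : e ** e = e -> f ** f = f -> (e ** f) ** (e ** f) = e ** f.
Proof.
  intros He Hf.
  set (y := inv (e ** f)).
  destruct (invP (e ** f)) as [H1 H2]. fold y in H1, H2. rewrite <- !mulA in H1, H2.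
  assert (Hyefy : y ** (e ** (f ** (y ** e))) = y ** e).
  { rewrite (mulA f y e), (mulA e), (mulA y), H2. reflexivity. }
  assert (Hy : f ** (y ** e) = y).
  { apply (inv_unique (e ** f)); [| apply invP].
    split; rewrite <- !mulA.
    - rewrite (idem_mulK mul mulA f), (idem_mulK mul mulA e) by assumption. exact H1.
    - rewrite (idem_mulK mul mulA e), (idem_mulK mul mulA f), Hyefy by assumption.
      reflexivity. }
  assert (Hyy : y ** y = y).
  { rewrite <- Hy, <- !mulA, Hyefy. reflexivity. }
  assert (Eef : e ** f = y).
  { rewrite <- (inv_involutive (e ** f)). apply idem_inv. exact Hyy. }
  rewrite Eef. exact Hyy.
Qed.

Lemma idem_mulC e f : e ** e = e -> f ** f = f -> e ** f = f ** e.
Proof.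
  intros He Hf.
  pose proof (idem_mul_idem e f He Hf) as Eef. pose proof (idem_mul_idem f e Hf He) as Efe.
  rewrite <- !mulA in Eef, Efe.
  apply (inv_unique (e ** f)); split; rewrite <- !mulA.
  - rewrite !Eef. reflexivity.
  - rewrite !Eef. reflexivity.
  - rewrite (idem_mulK mul mulA f), (idem_mulK mul mulA e), Eef by assumption. reflexivity.
  - rewrite (idem_mulK mul mulA e), (idem_mulK mul mulA f), Efe by assumption. reflexivity.
Qed.

Lemma inv_mul x y : inv (x ** y) = inv y ** inv x.
Proof.
  apply (inv_unique (x ** y)); [apply invP |].
  pose proof (idem_mulC _ _ (mul_inv_idem S mul inv mulA invP y)
                            (inv_mul_idem S mul inv mulA invP x)) as C.
  split; rewrite <- !mulA.
  - replace (x ** (y ** (inv y ** (inv x ** (x ** y)))))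
      with (x ** ((y ** inv y) ** (inv x ** x)) ** y) by (rewrite <- !mulA; reflexivity).
    rewrite C, <- !mulA, (mul_inv_mulK _ _ _ mulA invP), (proj1 (invP y)). reflexivity.
  - replace (inv y ** (inv x ** (x ** (y ** (inv y ** inv x)))))
      with (inv y ** ((inv x ** x) ** (y ** inv y)) ** inv x) by (rewrite <- !mulA; reflexivity).
    rewrite <- C, <- !mulA, (inv_mul_invK _ _ _ mulA invP), (proj2 (invP x)). reflexivity.
Qed.

End InverseSemigroup.

Section Construction.
Variables (S : Type) (mulS : S -> S -> S) (invS : S -> S)
          (I : Type) (mulI : I -> I -> I) (iota : S -> I) (act : S -> I -> I).
Local Infix "**" := mulS (at level 40, left associativity).
Local Infix "⊗" := mulI (at level 40, left associativity).
Hypothesis mulSA : forall a b c, a ** (b ** c) = (a ** b) ** c.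
Hypothesis invS_unique : forall a b c, inverse_of mulS a b -> inverse_of mulS a c -> b = c.
Hypothesis invSP : forall x, inverse_of mulS x (invS x).
Hypothesis mulIA : forall a b c, a ⊗ (b ⊗ c) = (a ⊗ b) ⊗ c.
Hypothesis mulII : forall e, e ⊗ e = e.
Hypothesis mulI_lrb : forall a b, a ⊗ (b ⊗ a) = a ⊗ b.
Hypothesis iota_inj : forall e f, e ** e = e -> f ** f = f -> iota e = iota f -> e = f.
Hypothesis iota_mul : forall e f, e ** e = e -> f ** f = f -> iota (e ** f) = iota e ⊗ iota f.
Hypothesis iota_transversal : forall a, exists s, s ** s = s /\ inverse_of mulI a (iota s).
Hypothesis act_mul : forall x y e, act (x ** y) e = act x (act y e).
Hypothesis act_mulI : forall x e f, act x (e ⊗ f) = act x e ⊗ act x f.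
Hypothesis act_range : forall x y, act x (iota (y ** invS y)) = iota ((x ** y) ** invS (x ** y)).
Hypothesis act_range_idem : forall x e, act (x ** invS x) e = iota (x ** invS x) ⊗ e.

Let invS_involutive := inv_involutive S mulS invS invS_unique invSP.
Let idem_invS := idem_inv S mulS invS invS_unique invSP.
Let mul_invS_idem := mul_inv_idem S mulS invS mulSA invSP.
Let invS_mul_idem := inv_mul_idem S mulS invS mulSA invSP.
Let mul_invS_absorb := mul_inv_absorb S mulS invS mulSA invSP.
Let idemS_mulC := idem_mulC S mulS invS mulSA invS_unique invSP.

Lemma idem_mul_invS s : s ** s = s -> s ** invS s = s.
Proof. intro Hs. rewrite (idem_invS s Hs). exact Hs. Qed.

Lemma act_range_invS x : act x (iota (invS x ** x)) = iota (x ** invS x).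
Proof.
  pose proof (act_range x (invS x)) as H. rewrite invS_involutive in H. rewrite H.
  rewrite (idem_invS _ (mul_invS_idem x)), mul_invS_idem. reflexivity.
Qed.

Lemma act_invS_range x : act (invS x) (iota (x ** invS x)) = iota (invS x ** x).
Proof. rewrite act_range, (idem_invS _ (invS_mul_idem x)), invS_mul_idem. reflexivity. Qed.

Lemma act_invS_L x e : band_L mulI e (iota (x ** invS x)) ->
  iota (invS x ** x) ⊗ act (invS x) e = iota (invS x ** x).
Proof. intros [_ H]. rewrite <- act_invS_range, <- act_mulI, H. reflexivity. Qed.

Definition inW (p : I * S) : Prop := band_L mulI (fst p) (iota (snd p ** invS (snd p))).

Local Notation Wm := (Wmul mulS mulI act).

Lemma Wdom_iff p : Wdom mulS invS mulI iota p <-> inW p.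
Proof. apply Lrel_bandE; assumption. Qed.

Lemma inW_mul p q : inW p -> inW q -> inW (Wm p q).
Proof.
  destruct p as [e x], q as [g y]. unfold inW, Wmul; simpl. intros [E1 E2] [G1 G2].
  assert (A1 : act x g ⊗ iota ((x ** y) ** invS (x ** y)) = act x g)
    by (rewrite <- act_range, <- act_mulI, G1; reflexivity).
  assert (A3 : iota ((x ** y) ** invS (x ** y)) ⊗ iota (x ** invS x)
               = iota ((x ** y) ** invS (x ** y))).
  { rewrite <- iota_mul, idemS_mulC, mul_invS_absorb by apply mul_invS_idem.
    reflexivity. }
  split.
  - rewrite <- mulIA, A1. reflexivity.
  - rewrite mulIA, <- A3 at 1. rewrite <- (mulIA _ _ e), E2, A3.
    rewrite <- act_range, <- act_mulI, G2. reflexivity.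
Qed.

Lemma Wmul_assoc p q r : Wm p (Wm q r) = Wm (Wm p q) r.
Proof.
  destruct p as [e x], q as [g y], r as [h z]. unfold Wmul; simpl.
  rewrite act_mulI, act_mul, mulIA, mulSA. reflexivity.
Qed.

Definition Winv (x : S) : I * S := (iota (invS x ** x), invS x).

Lemma inW_Winv x : inW (Winv x).
Proof. unfold inW, Winv; simpl. rewrite invS_involutive. split; apply mulII. Qed.

Lemma Wmul_Winv_r e x : inW (e, x) -> Wm (e, x) (Winv x) = (e, x ** invS x).
Proof.
  intros [H _]. cbn in H. unfold Wmul, Winv; simpl. rewrite act_range_invS, H. reflexivity.
Qed.

Lemma Wmul_Winv_l e x : inW (e, x) -> Wm (Winv x) (e, x) = (iota (invS x ** x), invS x ** x).
Proof. intro H. unfold Wmul, Winv; simpl. rewrite act_invS_L by exact H. reflexivity. Qed.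

Lemma Winv_inverse_of e x : inW (e, x) -> inverse_of Wm (e, x) (Winv x).
Proof.
  intro H. unfold inverse_of. rewrite Wmul_Winv_l, Wmul_Winv_r by exact H.
  unfold Wmul, Winv; simpl. split; f_equal.
  - rewrite act_range_invS. apply H.
  - apply invSP.
  - apply act_invS_L, H.
  - apply invSP.
Qed.

Lemma inW_range e x : inW (e, x) -> inW (e, x ** invS x).
Proof. unfold inW; simpl. rewrite (idem_mul_invS _ (mul_invS_idem x)). trivial. Qed.

Lemma Wrange_idem e x : inW (e, x) -> Wm (e, x ** invS x) (e, x ** invS x) = (e, x ** invS x).
Proof.
  intros [H _]. cbn in H. unfold Wmul; simpl.
  rewrite act_range_idem, mulIA, H, mulII, mul_invS_idem. reflexivity.
Qed.

Lemma Wrange_mul e x : inW (e, x) -> Wm (e, x ** invS x) (e, x) = (e, x).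
Proof.
  intros [H _]. cbn in H. unfold Wmul; simpl.
  rewrite act_range_idem, mulIA, H, mulII, <- mulSA, (proj1 (invSP x)). reflexivity.
Qed.

Lemma W_R_idem_unique e x f g : inW (e, x) -> inW (f, g) -> Wm (f, g) (f, g) = (f, g) ->
  Rrel (Wdom mulS invS mulI iota) Wm (e, x) (f, g) -> (f, g) = (e, x ** invS x).
Proof.
  intros He Hf Hid HR.
  assert (Hgg : g ** g = g) by (injection Hid; trivial).
  destruct (Rrel_idem_factors _ _ _ _ (proj2 (Wdom_iff _) Hf) Hid HR)
    as [[[u1 u2] [_ Hu]] [[v1 v2] [_ Hv]]].
  assert (Hfe : e = f ⊗ act g u1) by exact (f_equal fst Hu).
  assert (Hx : x = g ** u2) by exact (f_equal snd Hu).
  assert (Hg : g = x ** v2) by exact (f_equal snd Hv).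
  assert (Eg : g = x ** invS x).
  { assert (Hxg : (x ** invS x) ** g = g).
    { rewrite Hg, mulSA, <- (mulSA x), (proj1 (invSP x)). reflexivity. }
    assert (Hgx : g ** x = x) by (rewrite Hx, mulSA, Hgg; reflexivity).
    rewrite <- Hxg, idemS_mulC, mulSA, Hgx by (apply mul_invS_idem || exact Hgg).
    reflexivity. }
  rewrite Eg in Hf |- *. f_equal.
  destruct He as [E1 E2], Hf as [F1 F2]. cbn in E1, E2, F1, F2.
  rewrite (idem_mul_invS _ (mul_invS_idem x)) in F1, F2.
  assert (FE : f ⊗ e = e) by (rewrite Hfe, mulIA, mulII; reflexivity).
  rewrite <- F1, <- E2, mulIA, F1, FE. reflexivity.
Qed.

Definition W0 (p : I * S) : Prop := exists x, p = (iota (x ** invS x), x).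

Lemma W0_inW p : W0 p -> inW p.
Proof. intros [x ->]. split; apply mulII. Qed.

Lemma W0_Winv x : W0 (Winv x).
Proof. exists (invS x). unfold Winv. rewrite invS_involutive. reflexivity. Qed.

Lemma W0_inverse_unique e x q : W0 q -> inverse_of Wm (e, x) q -> q = Winv x.
Proof.
  intros [y ->] [H1 H2].
  assert (Hy : y = invS x).
  { apply (invS_unique x); [| apply invSP].
    split; [exact (f_equal snd H1) | exact (f_equal snd H2)]. }
  subst y. unfold Winv. rewrite invS_involutive. reflexivity.
Qed.

Lemma W0_mul a b : W0 a -> W0 b -> W0 (Wm a b).
Proof.
  intros [x ->] [y ->]. exists (x ** y). unfold Wmul; simpl.
  rewrite act_range, <- iota_mul, mul_invS_absorb by apply mul_invS_idem. reflexivity.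
Qed.

Lemma I_set_iff z :
  I_set (Wdom mulS invS mulI iota) Wm W0 z <-> inW z /\ snd z ** snd z = snd z.
Proof.
  split.
  - intros [[e x] [q [Hex [Hq [Hinv ->]]]]]. apply Wdom_iff in Hex.
    rewrite (W0_inverse_unique e x q Hq Hinv), Wmul_Winv_r by exact Hex.
    split; [apply inW_range, Hex | apply mul_invS_idem].
  - destruct z as [e s]. intros [Hz Hs]; simpl in Hs. exists (e, s), (Winv s).
    split; [apply Wdom_iff, Hz | split; [apply W0_Winv | split]].
    + apply Winv_inverse_of, Hz.
    + rewrite Wmul_Winv_r, idem_mul_invS by assumption. reflexivity.
Qed.

Lemma W_semigroup : semigroup_on (Wdom mulS invS mulI iota) Wm.
Proof.
  split.
  - intros a b Ha Hb. apply Wdom_iff, inW_mul; apply Wdom_iff; assumption.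
  - intros a b c _ _ _. apply Wmul_assoc.
Qed.

Lemma W_left_inverse : left_inverse_semigroup_on (Wdom mulS invS mulI iota) Wm.
Proof.
  split; [split; [exact W_semigroup |] |].
  - intros [e x] Ha. apply Wdom_iff in Ha. exists (Winv x).
    split; [apply Wdom_iff, inW_Winv | apply Winv_inverse_of, Ha].
  - intros [e x] Ha. apply Wdom_iff in Ha. exists (e, x ** invS x). split.
    + split; [apply Wdom_iff, inW_range, Ha |]. split; [apply Wrange_idem, Ha |].
      split; right.
      * exists (e, x). split; [apply Wdom_iff, Ha | symmetry; apply Wrange_mul, Ha].
      * exists (Winv x). split; [apply Wdom_iff, inW_Winv | symmetry; apply Wmul_Winv_r, Ha].
    + intros [f g] [Hf [Hid HR]]. apply Wdom_iff in Hf.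
      symmetry. apply W_R_idem_unique; assumption.
Qed.

Lemma W0_inverse_transversal : inverse_transversal (Wdom mulS invS mulI iota) Wm W0.
Proof.
  split; [exact (proj1 W_left_inverse) | split; [split; [| split] |]].
  - intros a Ha. apply Wdom_iff, W0_inW, Ha.
  - apply W0_mul.
  - intros a [x ->]. exists (Winv x). split.
    + split; [apply W0_Winv | apply Winv_inverse_of, W0_inW; exists x; reflexivity].
    + intros q [Hq Hinv]. symmetry. eapply W0_inverse_unique; eassumption.
  - intros [e x] Ha. apply Wdom_iff in Ha. exists (Winv x). split.
    + split; [apply W0_Winv | apply Winv_inverse_of, Ha].
    + intros q [Hq Hinv]. symmetry. eapply W0_inverse_unique; eassumption.
Qed.

Lemma W0_iso_S : sg_iso W0 Wm Full mulS.
Proof.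
  split; [| split; [| exists snd; repeat split]].
  - split; [intros a b; apply W0_mul | intros a b c _ _ _; apply Wmul_assoc].
  - split; [intros a b _ _; exact Logic.I | intros a b c _ _ _; apply mulSA].
  - intros a b [x ->] [y ->] Exy. simpl in Exy. subst y. reflexivity.
  - intros c _. exists (iota (c ** invS c), c). split; [exists c |]; reflexivity.
Qed.

Lemma IW_iso_I : sg_iso (I_set (Wdom mulS invS mulI iota) Wm W0) Wm Full mulI.
Proof.
  set (IW := I_set (Wdom mulS invS mulI iota) Wm W0).
  assert (IW_mul : forall a b, IW a -> IW b -> IW (Wm a b)).
  { intros [e s] [f t] Ha Hb. apply I_set_iff in Ha as [Ha Hs], Hb as [Hb Ht].
    apply I_set_iff. split; [apply inW_mul; assumption |].
    apply (idem_mul_idem S mulS invS mulSA invS_unique invSP); assumption. }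
  split; [| split; [| exists fst; split; [| split; [| split]]]].
  - split; [exact IW_mul | intros a b c _ _ _; apply Wmul_assoc].
  - split; [intros a b _ _; exact Logic.I | intros a b c _ _ _; apply mulIA].
  - intros; exact Logic.I.
  - intros [e s] [f t] Ha Hb Eef. simpl in Eef. subst f.
    apply I_set_iff in Ha as [[A1 A2] Hs], Hb as [[B1 B2] Ht]. simpl in *.
    rewrite idem_mul_invS in A1, A2, B1, B2 by assumption.
    assert (Est : s = t).
    { apply iota_inj; try assumption.
      (* [iota s] and [iota t] are L-related *)
      assert (Xs : iota s = iota (s ** t)) by
        (rewrite iota_mul by assumption;
         rewrite <- A2 at 1; rewrite <- B1 at 1; rewrite mulIA, A2; reflexivity).
      assert (Xt : iota t = iota (t ** s)) by
        (rewrite iota_mul by assumption;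
         rewrite <- B2 at 1; rewrite <- A1 at 1; rewrite mulIA, B2; reflexivity).
      rewrite Xs, Xt, idemS_mulC by assumption. reflexivity. }
    subst t. reflexivity.
  - intros c _. destruct (iota_transversal c) as [s [Hs [C1 C2]]].
    rewrite mulI_lrb in C1, C2.
    exists (c, s). split; [| reflexivity]. apply I_set_iff. split; [| exact Hs].
    unfold inW; simpl. rewrite idem_mul_invS by exact Hs. split; assumption.
  - intros [e s] [f t] Ha _. apply I_set_iff in Ha as [[Ha _] Hs]. simpl in *.
    rewrite <- (idem_mul_invS s) at 1 by exact Hs.
    rewrite act_range_idem, mulIA, Ha. reflexivity.
Qed.

End Construction.

Lemma construction_correct (S : Type) (mulS : S -> S -> S) (invS : S -> S)
      (I : Type) (mulI : I -> I -> I) (iota : S -> I) (act : S -> I -> I) :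
  construction_hyp S mulS invS I mulI iota act ->
  left_inverse_semigroup_on (Wdom mulS invS mulI iota) (Wmul mulS mulI act) /\
  exists W0 : I * S -> Prop,
    inverse_transversal (Wdom mulS invS mulI iota) (Wmul mulS mulI act) W0 /\
    sg_iso W0 (Wmul mulS mulI act) Full mulS /\
    sg_iso (I_set (Wdom mulS invS mulI iota) (Wmul mulS mulI act) W0)
           (Wmul mulS mulI act) Full mulI.
Proof.
  intros [[SG invS_ex] [invSP [[IG [mulII_full mulI_lrb_full]]
          [iota_inj [iota_mul [[_ [_ [_ [_ iota_ex]]]]
          [act_mul [act_mulI [act_range act_range_idem]]]]]]]]].
  pose proof (semigroup_full_assoc _ SG) as mulSA.
  pose proof (semigroup_full_assoc _ IG) as mulIA.
  assert (mulII : forall e, mulI e e = e) by (intro; apply mulII_full; exact Logic.I).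
  assert (mulI_lrb : forall a b, mulI a (mulI b a) = mulI a b)
    by (intros; apply mulI_lrb_full; exact Logic.I).
  assert (invS_unique : forall a b c, inverse_of mulS a b -> inverse_of mulS a c -> b = c).
  { intros a b c Hb Hc. destruct (invS_ex a Logic.I) as [b0 [_ U]].
    rewrite <- (U b), <- (U c); split; easy. }
  assert (iota_transversal : forall a, exists s, mulS s s = s /\ inverse_of mulI a (iota s)).
  { intro a. destruct (iota_ex a Logic.I) as [b [[[s [Hs ->]] Hinv] _]]. eauto. }
  split; [| exists (W0 S mulS invS I iota); split; [| split]].
  - eapply W_left_inverse; eassumption.
  - eapply W0_inverse_transversal; eassumption.
  - eapply W0_iso_S; eassumption.
  - eapply IW_iso_I; eassumption.
Qed.

Section LeftInverseSemigroup.
Variables (T : Type) (mul : T -> T -> T).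
Local Infix "**" := mul (at level 40, left associativity).
Hypothesis mulA : forall a b c, a ** (b ** c) = (a ** b) ** c.
Hypothesis regular : forall a, exists b, inverse_of mul a b.
Hypothesis R_idem_unique : forall a e f, e ** e = e -> f ** f = f ->
  Rrel Full mul a e -> Rrel Full mul a f -> e = f.

Lemma idem_R_eq g h : g ** g = g -> h ** h = h -> h ** g = g -> g ** h = h -> g = h.
Proof.
  intros Hg Hh Hhg Hgh. apply (R_idem_unique g); try assumption.
  - split; left; reflexivity.
  - split; right; [exists g | exists h]; split; easy.
Qed.

(* For an inverse [y] of [ef], [x := f y e] is an idempotent inverse of [ef]
   with [x ef = x] (R-uniqueness), whence [ef = e x]. *)
Lemma linv_idem_mul e f : e ** e = e -> f ** f = f -> (e ** f) ** (e ** f) = e ** f.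
Proof.
  intros He Hf.
  destruct (regular (e ** f)) as [y [H1 H2]]. rewrite <- !mulA in H1, H2.
  assert (Xe : f ** (y ** e) ** e = f ** (y ** e)) by (rewrite <- !mulA, He; reflexivity).
  assert (fX : f ** (f ** (y ** e)) = f ** (y ** e)) by (rewrite mulA, Hf; reflexivity).
  assert (Xinv : inverse_of mul (e ** f) (f ** (y ** e))).
  { split; rewrite <- !mulA.
    - rewrite (idem_mulK mul mulA f), (idem_mulK mul mulA e) by assumption. exact H1.
    - rewrite (idem_mulK mul mulA e), (idem_mulK mul mulA f) by assumption.
      replace (y ** (e ** (f ** (y ** e)))) with ((y ** (e ** (f ** y))) ** e)
        by (rewrite <- !mulA; reflexivity).
      rewrite H2. reflexivity. }
  generalize dependent (f ** (y ** e)). intros x Xe fX [X1 X2].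
  rewrite <- !mulA in X1, X2.
  assert (Xx : x ** x = x) by (rewrite <- Xe at 1; rewrite <- fX at 2; rewrite <- mulA; exact X2).
  assert (Xef : x ** (e ** f) = x).
  { symmetry. apply idem_R_eq; rewrite <- ?mulA.
    - exact Xx.
    - rewrite (mulA f x), (mulA e), (mulA x), X2. reflexivity.
    - exact X2.
    - rewrite (mulA x x), Xx. reflexivity. }
  assert (EF : e ** f = e ** x) by (rewrite <- X1, (mulA f x), fX, Xef; reflexivity).
  rewrite EF, <- mulA, (mulA x e), Xe, Xx. reflexivity.
Qed.

Lemma linv_idem_lrb e f : e ** e = e -> f ** f = f -> e ** (f ** e) = e ** f.
Proof.
  intros He Hf. pose proof (linv_idem_mul e f He Hf) as Eef.
  rewrite mulA. symmetry. apply idem_R_eq.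
  - exact Eef.
  - apply linv_idem_mul; assumption.
  - rewrite <- !mulA, (idem_mulK mul mulA e) by exact He. rewrite (mulA e f), Eef. reflexivity.
  - rewrite mulA, Eef. reflexivity.
Qed.

End LeftInverseSemigroup.

Section InverseTransversal.
Variables (T : Type) (mul : T -> T -> T) (T0 : T -> Prop) (o : T -> T).
Local Infix "**" := mul (at level 40, left associativity).
Hypothesis mulA : forall a b c, a ** (b ** c) = (a ** b) ** c.
Hypothesis R_idem_unique : forall a e f, e ** e = e -> f ** f = f ->
  Rrel Full mul a e -> Rrel Full mul a f -> e = f.
Hypothesis T0_mul : forall a b, T0 a -> T0 b -> T0 (a ** b).
Hypothesis o_T0 : forall x, T0 (o x).
Hypothesis o_inv : forall x, inverse_of mul x (o x).
Hypothesis o_unique : forall x y, T0 y -> inverse_of mul x y -> y = o x.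

Let o_regular a : exists b, inverse_of mul a b := ex_intro _ (o a) (o_inv a).
Let idem_mul := linv_idem_mul T mul mulA o_regular R_idem_unique.
Let idem_lrb := linv_idem_lrb T mul mulA o_regular R_idem_unique.
Let idem_R := idem_R_eq T mul R_idem_unique.
Let mul_o_mulK := mul_inv_mulK T mul o mulA o_inv.
Let mul_o_idem := mul_inv_idem T mul o mulA o_inv.
Let o_mul_idem := inv_mul_idem T mul o mulA o_inv.

Lemma o_involutive x : T0 x -> o (o x) = x.
Proof. intro Hx. symmetry. apply o_unique; [exact Hx | apply inverse_of_sym, o_inv]. Qed.

Lemma idem_mul_o e : e ** e = e -> e ** o e = e.
Proof.
  intro He. symmetry. apply idem_R; [exact He | apply mul_o_idem | |].
  - rewrite <- mulA. apply o_inv.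
  - rewrite mulA, He. reflexivity.
Qed.

Lemma o_idem_mul_r e : e ** e = e -> o e ** e = o e.
Proof. intro He. rewrite <- (idem_mul_o e He) at 2. apply o_inv. Qed.

Lemma o_idem e : e ** e = e -> o e ** o e = o e.
Proof.
  intro He. rewrite <- (o_idem_mul_r e He) at 1. rewrite <- mulA. apply o_inv.
Qed.

Lemma o_T0_idem x : T0 x -> x ** x = x -> o x = x.
Proof. intros Hx Hxx. symmetry. apply o_unique; [exact Hx | split; rewrite Hxx; exact Hxx]. Qed.

(* [x^0 x] is idempotent, so by left regularity it absorbs [f x^0 x] on the left. *)
Lemma mul_idem_o_mulK x f z : f ** f = f -> x ** (f ** (o x ** (x ** z))) = x ** (f ** z).
Proof.
  intro Hf.
  replace (x ** (f ** (o x ** (x ** z))))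
    with (x ** (((o x ** x) ** (f ** (o x ** x))) ** z))
    by (rewrite <- !mulA, mul_o_mulK; reflexivity).
  rewrite idem_lrb by (apply o_mul_idem || exact Hf).
  rewrite <- !mulA, mul_o_mulK. reflexivity.
Qed.

Lemma conj_idem x e : e ** e = e -> (x ** e ** o x) ** (x ** e ** o x) = x ** e ** o x.
Proof.
  intro He. rewrite <- !mulA, (mul_idem_o_mulK x e) by exact He.
  rewrite (mulA e e), He. reflexivity.
Qed.

Lemma o_mul_oo t : o t ** o (o t) = o t ** t.
Proof.
  apply idem_R; [apply mul_o_idem | apply o_mul_idem | |].
  - rewrite <- !mulA, (inv_mul_invK T mul o mulA o_inv). reflexivity.
  - rewrite <- !mulA, mul_o_mulK. reflexivity.
Qed.

Lemma o_mul_L e x : T0 x -> band_L mul e (x ** o x) -> o (e ** x) = o x.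
Proof.
  intros Tx [E1 E2]. symmetry. apply o_unique; [apply o_T0 |].
  assert (OE : o x ** e = o x).
  { rewrite <- (inv_mul_invK T mul o mulA o_inv), (mulA x (o x) e), E2. apply o_inv. }
  split.
  - replace (e ** x ** (o x ** (e ** x))) with (e ** (((x ** o x) ** e) ** x))
      by (rewrite <- !mulA; reflexivity).
    rewrite E2, <- !mulA, (proj1 (o_inv x)). reflexivity.
  - rewrite <- !mulA, (mulA (o x) e), OE. apply o_inv.
Qed.

Definition S0 : Type := {x : T | T0 x}.
Definition mulS0 (a b : S0) : S0 :=
  exist _ (proj1_sig a ** proj1_sig b) (T0_mul _ _ (proj2_sig a) (proj2_sig b)).
Definition invS0 (a : S0) : S0 := exist _ (o (proj1_sig a)) (o_T0 _).

(* All idempotents of [T]; by [idem_mul_o] this is [I(T)]. *)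
Definition Idem : Type := {e : T | e ** e = e}.
Definition mulIdem (a b : Idem) : Idem :=
  exist _ (proj1_sig a ** proj1_sig b) (idem_mul _ _ (proj2_sig a) (proj2_sig b)).
Definition iota0 (x : S0) : Idem := exist _ (proj1_sig x ** o (proj1_sig x)) (mul_o_idem _).
Definition conjIdem (x : S0) (e : Idem) : Idem :=
  exist _ (proj1_sig x ** proj1_sig e ** o (proj1_sig x)) (conj_idem _ _ (proj2_sig e)).

Lemma mulS0A a b c : mulS0 a (mulS0 b c) = mulS0 (mulS0 a b) c.
Proof. apply val_inj, mulA. Qed.

Lemma invS0P x : inverse_of mulS0 x (invS0 x).
Proof. split; apply val_inj, o_inv. Qed.

Lemma invS0_unique a b c : inverse_of mulS0 a b -> inverse_of mulS0 a c -> b = c.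
Proof.
  assert (Hval : forall b, inverse_of mulS0 a b -> proj1_sig b = o (proj1_sig a)).
  { intros [y Ty] [H1 H2]. apply o_unique; [exact Ty |].
    split; [exact (f_equal (@proj1_sig _ _) H1) | exact (f_equal (@proj1_sig _ _) H2)]. }
  intros Hb Hc. apply val_inj. rewrite (Hval b Hb), (Hval c Hc). reflexivity.
Qed.

Lemma S0_inverse_semigroup : inverse_semigroup_on Full mulS0.
Proof.
  split; [split; [intros a b _ _; exact Logic.I | intros a b c _ _ _; apply mulS0A] |].
  intros a _. exists (invS0 a). split; [split; [exact Logic.I | apply invS0P] |].
  intros b [_ Hb]. exact (invS0_unique a _ _ (invS0P a) Hb).
Qed.

Lemma S0_idem_val e : mulS0 e e = e -> proj1_sig e ** proj1_sig e = proj1_sig e.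
Proof. intro He. exact (f_equal (@proj1_sig _ _) He). Qed.

Lemma iota0_idem_val e : mulS0 e e = e -> proj1_sig (iota0 e) = proj1_sig e.
Proof.
  intro He. simpl. rewrite o_T0_idem by (apply proj2_sig || apply S0_idem_val, He).
  apply S0_idem_val, He.
Qed.

Lemma S0_idem_mul e f : mulS0 e e = e -> mulS0 f f = f ->
  mulS0 (mulS0 e f) (mulS0 e f) = mulS0 e f.
Proof. intros He Hf. apply val_inj, idem_mul; apply S0_idem_val; assumption. Qed.

Lemma iota0_mul e f : mulS0 e e = e -> mulS0 f f = f ->
  iota0 (mulS0 e f) = mulIdem (iota0 e) (iota0 f).
Proof.
  intros He Hf. pose proof (S0_idem_mul e f He Hf) as Hef.
  apply val_inj. cbn [mulIdem proj1_sig].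
  rewrite !iota0_idem_val by assumption. reflexivity.
Qed.

Lemma Idem_left_regular_band : left_regular_band_on Full mulIdem.
Proof.
  split; [split; [intros a b _ _; exact Logic.I | intros a b c _ _ _; apply val_inj, mulA] |].
  split.
  - intros a _. apply val_inj, (proj2_sig a).
  - intros a b _ _. apply val_inj, idem_lrb; apply proj2_sig.
Qed.

Lemma iota0_inj e f : mulS0 e e = e -> mulS0 f f = f -> iota0 e = iota0 f -> e = f.
Proof.
  intros He Hf Hef. apply val_inj.
  rewrite <- (iota0_idem_val e He), <- (iota0_idem_val f Hf), Hef. reflexivity.
Qed.

Lemma iota0_semilattice_transversal :
  semilattice_transversal Full mulIdem (E0_in_I mulS0 iota0).
Proof.
  split; [intros; exact Logic.I | split; [| split; [| split]]].
  - intros a b [e [He ->]] [f [Hf ->]]. exists (mulS0 e f).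
    split; [apply S0_idem_mul; assumption | symmetry; apply iota0_mul; assumption].
  - intros a _. apply val_inj, (proj2_sig a).
  - intros a b [e [He ->]] [f [Hf ->]]. rewrite <- !iota0_mul by assumption.
    f_equal. apply (idem_mulC S0 mulS0 invS0 mulS0A invS0_unique invS0P); assumption.
  - intros [a Ha] _. set (s := exist T0 (o a) (o_T0 a) : S0).
    assert (Hs : mulS0 s s = s) by (apply val_inj, o_idem, Ha).
    exists (iota0 s). split.
    + split; [exists s; split; [exact Hs | reflexivity] |].
      split; apply val_inj; cbn [mulIdem proj1_sig]; rewrite iota0_idem_val by exact Hs;
        apply o_inv.
    + intros b [[f [Hf ->]] [H1 H2]]. apply val_inj. rewrite !iota0_idem_val by assumption.
      apply (f_equal (@proj1_sig _ _)) in H1, H2. cbn [mulIdem proj1_sig] in H1, H2.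
      rewrite iota0_idem_val in H1, H2 by exact Hf.
      symmetry. apply o_unique; [apply proj2_sig | split; assumption].
Qed.

Lemma o_mul x y : T0 x -> T0 y -> o (x ** y) = o y ** o x.
Proof.
  intros Tx Ty.
  exact (f_equal (@proj1_sig _ _)
    (inv_mul S0 mulS0 invS0 mulS0A invS0_unique invS0P (exist _ x Tx) (exist _ y Ty))).
Qed.

Lemma conjIdem_mul x y e : conjIdem (mulS0 x y) e = conjIdem x (conjIdem y e).
Proof.
  apply val_inj. destruct x as [x Tx], y as [y Ty]; simpl.
  rewrite o_mul, <- !mulA by assumption. reflexivity.
Qed.

Lemma conjIdem_mulIdem x e f : conjIdem x (mulIdem e f) = mulIdem (conjIdem x e) (conjIdem x f).
Proof.
  apply val_inj. simpl. rewrite <- !mulA, mul_idem_o_mulK by apply (proj2_sig e).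
  reflexivity.
Qed.

Lemma iota0_range x : proj1_sig (iota0 (mulS0 x (invS0 x))) = proj1_sig x ** o (proj1_sig x).
Proof.
  apply iota0_idem_val, (mul_inv_idem S0 mulS0 invS0 mulS0A invS0P).
Qed.

Lemma conjIdem_range x y :
  conjIdem x (iota0 (mulS0 y (invS0 y))) = iota0 (mulS0 (mulS0 x y) (invS0 (mulS0 x y))).
Proof.
  apply val_inj. cbn [conjIdem proj1_sig]. rewrite !iota0_range.
  destruct x as [x Tx], y as [y Ty]; simpl.
  rewrite o_mul, <- !mulA by assumption. reflexivity.
Qed.

Lemma conjIdem_range_idem x e :
  conjIdem (mulS0 x (invS0 x)) e = mulIdem (iota0 (mulS0 x (invS0 x))) e.
Proof.
  apply val_inj. cbn [conjIdem mulIdem proj1_sig]. rewrite iota0_range.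
  destruct x as [x Tx], e as [e He]; simpl.
  rewrite (o_T0_idem (x ** o x) (T0_mul _ _ Tx (o_T0 x)) (mul_o_idem x)).
  rewrite <- mulA, idem_lrb by (apply mul_o_idem || exact He). reflexivity.
Qed.

Lemma S0_Idem_construction : construction_hyp S0 mulS0 invS0 Idem mulIdem iota0 conjIdem.
Proof.
  split; [exact S0_inverse_semigroup | split; [exact invS0P |]].
  split; [exact Idem_left_regular_band | split; [exact iota0_inj |]].
  split; [exact iota0_mul | split; [exact iota0_semilattice_transversal |]].
  split; [exact conjIdem_mul | split; [exact conjIdem_mulIdem |]].
  split; [exact conjIdem_range | exact conjIdem_range_idem].
Qed.

Local Notation WT := (Wdom mulS0 invS0 mulIdem iota0).

Lemma band_L_Idem a b : band_L mulIdem a b <-> band_L mul (proj1_sig a) (proj1_sig b).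
Proof.
  split; intros [H1 H2]; split.
  - exact (f_equal (@proj1_sig _ _) H1).
  - exact (f_equal (@proj1_sig _ _) H2).
  - apply val_inj, H1.
  - apply val_inj, H2.
Qed.

Lemma WT_iff (p : Idem * S0) :
  WT p <-> band_L mul (proj1_sig (fst p)) (proj1_sig (snd p) ** o (proj1_sig (snd p))).
Proof.
  unfold Wdom. rewrite Lrel_bandE, band_L_Idem, iota0_range; [reflexivity | |].
  - intros; apply val_inj, mulA.
  - intro a; apply val_inj, (proj2_sig a).
Qed.

Definition to_W (t : T) : Idem * S0 :=
  (exist _ (t ** o t) (mul_o_idem t), exist _ (o (o t)) (o_T0 (o t))).
Definition of_W (p : Idem * S0) : T := proj1_sig (fst p) ** proj1_sig (snd p).

Lemma of_to_W t : of_W (to_W t) = t.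
Proof. unfold of_W, to_W; simpl. rewrite <- mulA, o_mul_oo. apply o_inv. Qed.

Lemma to_W_WT t : WT (to_W t).
Proof.
  apply WT_iff; simpl; unfold band_L. rewrite (o_involutive (o t) (o_T0 t)), <- !mulA.
  split; [rewrite (proj1 (o_inv (o t))) | rewrite (proj2 (o_inv t))]; reflexivity.
Qed.

Lemma to_of_W p : WT p -> to_W (of_W p) = p.
Proof.
  destruct p as [[e He] [x Tx]]. intro Hp. apply WT_iff in Hp. simpl in Hp.
  unfold of_W, to_W; simpl.
  f_equal; apply val_inj; simpl; rewrite (o_mul_L e x Tx Hp).
  - rewrite <- mulA. apply (proj1 Hp).
  - apply o_involutive, Tx.
Qed.

Lemma of_W_mul p q : of_W (Wmul mulS0 mulIdem conjIdem p q) = of_W p ** of_W q.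
Proof.
  destruct p as [[e He] [x Tx]], q as [[f Hf] [y Ty]]. unfold of_W, Wmul; simpl.
  rewrite <- !mulA, mul_idem_o_mulK by exact Hf. reflexivity.
Qed.

Lemma T_iso_W : sg_iso Full mul WT (Wmul mulS0 mulIdem conjIdem).
Proof.
  destruct (construction_correct _ _ _ _ _ _ _ S0_Idem_construction) as [[[WS _] _] _].
  split; [split; [intros a b _ _; exact Logic.I | intros a b c _ _ _; apply mulA] |].
  split; [exact WS | exists to_W; split; [| split; [| split]]].
  - intros a _. apply to_W_WT.
  - intros a b _ _ Hab. rewrite <- (of_to_W a), <- (of_to_W b), Hab. reflexivity.
  - intros p Hp. exists (of_W p). split; [exact Logic.I | apply to_of_W, Hp].
  - intros a b _ _. rewrite <- (to_of_W (Wmul mulS0 mulIdem conjIdem (to_W a) (to_W b))).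
    + rewrite of_W_mul, !of_to_W. reflexivity.
    + apply (proj1 WS); apply to_W_WT.
Qed.

End InverseTransversal.

Lemma inverse_transversal_fun (T : Type) (mul : T -> T -> T) (T0 : T -> Prop) :
  inverse_transversal Full mul T0 ->
  exists o : T -> T, (forall x, T0 (o x)) /\ (forall x, inverse_of mul x (o x)) /\
    (forall x y, T0 y -> inverse_of mul x y -> y = o x).
Proof.
  intros [_ [_ U]].
  assert (Ho : forall x, {y | T0 y /\ inverse_of mul x y}).
  { intro x. apply constructive_indefinite_description.
    destruct (U x Logic.I) as [y [Hy _]]. exists y; exact Hy. }
  exists (fun x => proj1_sig (Ho x)).
  split; [intro x; apply (proj2_sig (Ho x)) | split; [intro x; apply (proj2_sig (Ho x)) |]].
  intros x y Ty Hxy. destruct (U x Logic.I) as [z [_ Hz]].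
  rewrite <- (Hz y), <- (Hz (proj1_sig (Ho x)))
    by first [exact (proj2_sig (Ho x)) | split; assumption].
  reflexivity.
Qed.

Lemma left_inverse_transversal_construction (T : Type) (mul : T -> T -> T) (T0 : T -> Prop) :
  left_inverse_semigroup_on Full mul -> inverse_transversal Full mul T0 ->
  exists (S : Type) (mulS : S -> S -> S) (invS : S -> S)
         (I : Type) (mulI : I -> I -> I) (iota : S -> I) (act : S -> I -> I),
    construction_hyp S mulS invS I mulI iota act /\
    sg_iso Full mul (Wdom mulS invS mulI iota) (Wmul mulS mulI act).
Proof.
  intros [[SG _] R_unique] HT.
  destruct (inverse_transversal_fun T mul T0 HT) as [o [o_T0 [o_inv o_unique]]].
  pose proof (semigroup_full_assoc _ SG) as mulA.
  assert (R_idem_unique : forall a e f, mul e e = e -> mul f f = f ->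
            Rrel Full mul a e -> Rrel Full mul a f -> e = f).
  { intros a e f He Hf Re Rf. destruct (R_unique a Logic.I) as [g [_ Hg]].
    rewrite <- (Hg e), <- (Hg f); split; easy. }
  assert (T0_mul : forall a b, T0 a -> T0 b -> T0 (mul a b))
    by (destruct HT as [_ [[_ [Hmul _]] _]]; exact Hmul).
  do 7 eexists. split.
  - exact (S0_Idem_construction T mul T0 o mulA R_idem_unique T0_mul o_T0 o_inv o_unique).
  - exact (T_iso_W T mul T0 o mulA R_idem_unique T0_mul o_T0 o_inv o_unique).
Qed.

Theorem corollary4p3 :
  (forall (S : Type) (mulS : S -> S -> S) (invS : S -> S)
          (I : Type) (mulI : I -> I -> I) (iota : S -> I) (act : S -> I -> I),
      construction_hyp S mulS invS I mulI iota act ->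
      left_inverse_semigroup_on (Wdom mulS invS mulI iota) (Wmul mulS mulI act) /\
      exists W0 : I * S -> Prop,
        inverse_transversal (Wdom mulS invS mulI iota) (Wmul mulS mulI act) W0 /\
        sg_iso W0 (Wmul mulS mulI act) Full mulS /\
        sg_iso (I_set (Wdom mulS invS mulI iota) (Wmul mulS mulI act) W0)
               (Wmul mulS mulI act) Full mulI)
  /\
  (forall (T : Type) (mulT : T -> T -> T) (T0 : T -> Prop),
      left_inverse_semigroup_on Full mulT ->
      inverse_transversal Full mulT T0 ->
      exists (S : Type) (mulS : S -> S -> S) (invS : S -> S)
             (I : Type) (mulI : I -> I -> I) (iota : S -> I) (act : S -> I -> I),
        construction_hyp S mulS invS I mulI iota act /\
        sg_iso Full mulT (Wdom mulS invS mulI iota) (Wmul mulS mulI act)).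
Proof.
  split.
  - exact construction_correct.
  - exact left_inverse_transversal_construction.
Qed.
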